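(* If $v_*$ is a minimizer of CQopt, then $(\lambda_*,u_* )$ with $u_*=Pv_*$ and $\lambda_*=\frac{1}{\gamma^2}u_*^{\top}(PAPu_*+b_0)$ is a minimizer of LGopt. Conversely, if $(\lambda_*,u_* )$ is a minimizer of LGopt, then $v_*=n_0+u_*$ is a minimizer of CQopt.
   Context: Let $A\in\mathbb{R}^{n\times n}$ be symmetric, $C\in\mathbb{R}^{n\times m}$ ($m<n$) full column rank, $b\in\mathbb{R}^m$, $n_0=C(C^{\top}C)^{-1}b$ with $\|n_0\|<1$, $\gamma=\sqrt{1-\|n_0\|^2}$, $P=I-C(C^{\top}C)^{-1}C^{\top}$ (orthogonal projector onto $\mathcal N(C^{\top})$), $b_0=PAn_0$. CQopt: minimize $v^{\top}PAPv+2v^{\top}b_0$ over $v\in n_0+\mathcal N(C^{\top})$ subject to $\|Pv\|=\gamma$. LGopt: minimize $\lambda$ over pairs $(\lambda,u)\in\mathbb{R}\times\mathbb{R}^n$ with $(PAP-\lambda I)u=-b_0$, $\|u\|=\gamma$, $u\in\mathcal N(C^{\top})$; a minimizer is a feasible pair with smallest $\lambda$. *)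

From HB Require Import structures.
From mathcomp Require Import all_boot all_order all_algebra.
Set Implicit Arguments. Unset Strict Implicit. Unset Printing Implicit Defensive.
Import Order.TTheory GRing.Theory Num.Theory.
Local Open Scope ring_scope.

Section CQ.
Variables (R : rcfType) (n m : nat).
Variables (A : 'M[R]_n) (C : 'M[R]_(n, m)) (b : 'cV[R]_m).

Definition dotv (u v : 'cV[R]_n) : R := (u^T *m v) 0 0.
Definition normv (u : 'cV[R]_n) : R := Num.sqrt (dotv u u).

Definition n0 : 'cV[R]_n := C *m invmx (C^T *m C) *m b.
Definition gamma : R := Num.sqrt (1 - normv n0 ^+ 2).
Definition Pm : 'M[R]_n := 1%:M - C *m invmx (C^T *m C) *m C^T.
Definition b0 : 'cV[R]_n := Pm *m A *m n0.
Definition PAP : 'M[R]_n := Pm *m A *m Pm.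

Definition CQobj (v : 'cV[R]_n) : R := dotv v (PAP *m v) + 2 * dotv v b0.
Definition CQfeas (v : 'cV[R]_n) : Prop :=
  (exists w : 'cV[R]_n, C^T *m w = 0 /\ v = n0 + w) /\ normv (Pm *m v) = gamma.
Definition CQmin (v : 'cV[R]_n) : Prop :=
  CQfeas v /\ forall w, CQfeas w -> CQobj v <= CQobj w.

Definition LGfeas (lam : R) (u : 'cV[R]_n) : Prop :=
  (PAP - lam%:M) *m u = - b0 /\ normv u = gamma /\ C^T *m u = 0.
Definition LGmin (lam : R) (u : 'cV[R]_n) : Prop :=
  LGfeas lam u /\ forall mu w, LGfeas mu w -> lam <= mu.

End CQ.

From HB Require Import structures.
From mathcomp Require Import all_boot all_order all_algebra.
From mathcomp Require Import complex polyrcf sesquilinear spectral.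
From mathcomp Require Import ring lra.
Set Implicit Arguments. Unset Strict Implicit. Unset Printing Implicit Defensive.
Import Order.TTheory GRing.Theory Num.Theory.
Local Open Scope ring_scope.

(* On the sphere S = {w in ker C^T : |w| = gamma}, write N := PAP and
   q(w) := w^T N w + 2 w^T b0, so that CQobj (n0 + w) = q(w).  If (N - mu) x = -b0 and
   x is in S, then q(w) - q(x) = (w - x)^T (N - mu) (w - x) for every w in S.  Hence a
   multiplier mu for which N - mu is positive semidefinite on ker C^T makes x a global
   minimiser of q on S, and it is also the smallest multiplier of any solution of LGopt.
   Conversely such a multiplier always exists: penalising the range of C reduces to the
   whole space, where diagonalising N turns |x| = gamma into the secular equation
   sum_i c_i^2 / (lambda_i - mu)^2 = gamma^2, which has a root below the smallest
   eigenvalue by the intermediate value theorem for polynomials, except in the "hard case"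
   where mu = lambda_min works after adding a suitable eigenvector.  A minimiser of CQopt
   has zero gap to such a certified point, which forces it to satisfy the same equation. *)

Section Dotv.
Variables (R : rcfType) (n : nat).
Implicit Types (u v w : 'cV[R]_n) (N : 'M[R]_n) (a : R).

Lemma dotvE u v : dotv u v = \sum_i u i 0 * v i 0.
Proof. by rewrite /dotv !mxE; apply: eq_bigr => i _; rewrite mxE. Qed.

Lemma dotvC u v : dotv u v = dotv v u.
Proof. by rewrite !dotvE; apply: eq_bigr => i _; rewrite mulrC. Qed.

Lemma dotvDr u v w : dotv u (v + w) = dotv u v + dotv u w.
Proof. by rewrite !dotvE -big_split; apply: eq_bigr => i _; rewrite mxE mulrDr. Qed.

Lemma dotvDl u v w : dotv (v + w) u = dotv v u + dotv w u.
Proof. by rewrite dotvC dotvDr !(dotvC u). Qed.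

Lemma dotvZr a u v : dotv u (a *: v) = a * dotv u v.
Proof. by rewrite !dotvE mulr_sumr; apply: eq_bigr => i _; rewrite mxE mulrCA. Qed.

Lemma dotvZl a u v : dotv (a *: u) v = a * dotv u v.
Proof. by rewrite dotvC dotvZr dotvC. Qed.

Lemma dotvNr u v : dotv u (- v) = - dotv u v.
Proof. by rewrite -scaleN1r dotvZr mulN1r. Qed.

Lemma dotvNl u v : dotv (- u) v = - dotv u v.
Proof. by rewrite dotvC dotvNr dotvC. Qed.

Lemma dotvBr u v w : dotv u (v - w) = dotv u v - dotv u w.
Proof. by rewrite dotvDr dotvNr. Qed.

Lemma dotvBl u v w : dotv (v - w) u = dotv v u - dotv w u.
Proof. by rewrite dotvDl dotvNl. Qed.

Lemma dotv0r u : dotv u 0 = 0.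
Proof. by rewrite dotvE big1 // => i _; rewrite mxE mulr0. Qed.

Lemma dotv0l u : dotv 0 u = 0.
Proof. by rewrite dotvC dotv0r. Qed.

Lemma dotv_mulmx u N v : dotv u (N *m v) = dotv (N^T *m u) v.
Proof. by rewrite /dotv trmx_mul trmxK mulmxA. Qed.

Lemma dotv_sym u N v : N^T = N -> dotv u (N *m v) = dotv v (N *m u).
Proof. by move=> hN; rewrite dotv_mulmx hN dotvC. Qed.

Lemma dotv_scalar a u v : dotv u (a%:M *m v) = a * dotv u v.
Proof. by rewrite mul_scalar_mx dotvZr. Qed.

Lemma dotv_ge0 u : 0 <= dotv u u.
Proof. by rewrite dotvE sumr_ge0 // => i _; rewrite -expr2 sqr_ge0. Qed.

Lemma dotv_eq0 u : dotv u u = 0 -> u = 0.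
Proof.
rewrite dotvE => h; apply/matrixP => i j; rewrite ord1 mxE.
have /psumr_eq0P h0 : \sum_(l < n) u l 0 ^+ 2 = 0.
  by rewrite -[RHS]h; apply: eq_bigr => l _; rewrite expr2.
by apply/eqP; rewrite -sqrf_eq0 h0 // => l _; apply: sqr_ge0.
Qed.

Lemma dotv_gt0 u : u != 0 -> 0 < dotv u u.
Proof. by move=> u0; rewrite lt0r dotv_ge0 andbT; apply: contra u0 => /eqP/dotv_eq0 ->. Qed.

Lemma normv_eqE u g : 0 <= g -> (normv u = g) <-> (dotv u u = g ^+ 2).
Proof.
move=> g0; split => [<-|h]; first by rewrite sqr_sqrtr // dotv_ge0.
by rewrite /normv h sqrtr_sqr ger0_norm.
Qed.

Lemma sphere_neq0 u g : 0 < g -> dotv u u = g ^+ 2 -> u != 0.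
Proof.
move=> g_gt0 uu; apply/eqP => u0; move: uu; rewrite u0 dotv0l => /esym/eqP.
by rewrite expf_eq0 gt_eqF.
Qed.

End Dotv.

Lemma sphere_meets_line (R : rcfType) n (x z : 'cV[R]_n) g :
  z != 0 -> dotv x x <= g ^+ 2 -> exists t, dotv (x + t *: z) (x + t *: z) = g ^+ 2.
Proof.
move=> /dotv_gt0 a_gt0 hx.
set a := dotv z z in a_gt0; set be := dotv x z; set c0 := dotv x x - g ^+ 2.
have hdisc : 0 <= be ^+ 2 - a * c0 by have := sqr_ge0 be; rewrite /c0; nra.
set q := Num.sqrt (be ^+ 2 - a * c0).
have q2 : q ^+ 2 = be ^+ 2 - a * c0 by rewrite sqr_sqrtr.
set t := (q - be) / a.
have hat : a * t = q - be by rewrite /t mulrC divfK // gt_eqF.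
exists t.
have -> : dotv (x + t *: z) (x + t *: z) = dotv x x + 2 * t * be + t ^+ 2 * a.
  by rewrite !dotvDl !dotvDr !dotvZl !dotvZr (dotvC z x) -/a -/be; ring.
have : a * (t ^+ 2 * a + 2 * t * be + c0) = 0.
  have -> : a * (t ^+ 2 * a + 2 * t * be + c0) = (a * t) ^+ 2 + 2 * be * (a * t) + a * c0.
    by ring.
  by rewrite hat; have := q2; nra.
move/eqP; rewrite mulf_eq0 gt_eqF //= /c0 => /eqP; lra.
Qed.

Lemma unitmx_ker0 (F : fieldType) k (N : 'M[F]_k) :
  (forall z : 'cV_k, N *m z = 0 -> z = 0) -> N \in unitmx.
Proof.
move=> hN; rewrite -unitmx_tr -row_free_unit -kermx_eq0; apply/eqP/row_matrixP => i.
rewrite row0; set x := row i _.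
have hx : x *m N^T = 0 by apply/sub_kermxP; exact: row_sub.
have : N *m x^T = 0 by rewrite -[N]trmxK -trmx_mul hx trmx0.
by move/hN => /(congr1 trmx); rewrite trmxK trmx0.
Qed.

Definition secular (R : numFieldType) (I : finType) (d w : I -> R) (mu : R) : R :=
  \sum_i w i / (d i - mu) ^+ 2.

Section SecularEquation.
Variables (R : rcfType) (I : finType) (d w : I -> R).
Local Notation phi := (secular d w).

Lemma secular_ivt c a1 a2 : a1 <= a2 -> (forall j, w j != 0 -> a2 < d j) ->
  phi a1 <= c <= phi a2 -> exists2 mu, a1 <= mu <= a2 & phi mu = c.
Proof.
move=> a12 poles /andP[h1 h2].
pose J j := w j != 0.
pose D x := \prod_(j | J j) (x - d j) ^+ 2.
pose pp := \sum_(i | J i) w i *: \prod_(j | J j && (j != i)) ('X - (d j)%:P) ^+ 2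
           - c *: \prod_(j | J j) ('X - (d j)%:P) ^+ 2.
have D_gt0 x : x <= a2 -> 0 < D x.
  move=> xa; apply: prodr_gt0 => j /poles dj.
  by rewrite exprn_even_gt0 //= subr_eq0 lt_eqF // (le_lt_trans xa).
have ppE x : x <= a2 -> pp.[x] = D x * (phi x - c).
  move=> xa; rewrite /pp hornerD hornerN !hornerZ !horner_prod horner_sum mulrBr.
  congr (_ - _); last first.
    by rewrite mulrC; congr (_ * _); apply: eq_bigr => j _; rewrite horner_exp hornerXsubC.
  rewrite /secular mulr_sumr [RHS](bigID J) /= [X in _ = _ + X]big1 ?addr0; last first.
    by move=> i /negPn/eqP ->; rewrite mul0r mulr0.
  apply: eq_bigr => i Ji; rewrite hornerZ horner_prod /D [in RHS](bigD1 i) //=.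
  under eq_bigr => j _ do rewrite horner_exp hornerXsubC.
  have di : x - d i != 0 by rewrite subr_eq0 lt_eqF // (le_lt_trans xa) ?poles.
  by rewrite -[(d i - x) ^+ 2]sqrrN opprB; field.
have ivt : pp.[a1] <= 0 <= pp.[a2].
  by rewrite !ppE // pmulr_rle0 ?pmulr_rge0 ?D_gt0 // subr_le0 subr_ge0 h1.
have [mu /andP[m1 m2] /rootP] := poly_ivt a12 ivt.
rewrite ppE // => /eqP; rewrite mulf_eq0 gt_eqF ?D_gt0 //= subr_eq0 => /eqP.
by exists mu; rewrite ?m1.
Qed.

Hypothesis w_ge0 : forall i, 0 <= w i.

Lemma secular_term_le mu i : w i / (d i - mu) ^+ 2 <= phi mu.
Proof.
rewrite /secular (bigD1 i) //= lerDl.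
by apply: sumr_ge0 => j _; apply: divr_ge0 (w_ge0 j) (sqr_ge0 _).
Qed.

(* with r := (S + 1) / g every denominator is at least r ^+ 2, and
   S / r ^+ 2 = g ^+ 2 * S / (S + 1) ^+ 2 <= g ^+ 2 *)
Lemma secular_far_le th g : 0 < g -> (forall i, th <= d i) ->
  phi (th - (\sum_i w i + 1) / g) <= g ^+ 2.
Proof.
move=> g_gt0 hth; set S := \sum_i w i; set r := (S + 1) / g.
have S_ge0 : 0 <= S by apply: sumr_ge0.
have r_gt0 : 0 < r by rewrite divr_gt0 // ltr_pwDr.
apply: (@le_trans _ _ (S / r ^+ 2)).
  rewrite /secular /S mulr_suml; apply: ler_sum => i _; apply: ler_wpM2l; first exact: w_ge0.
  have r_le : r <= d i - (th - r) by have := hth i; lra.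
  have di_gt0 : 0 < d i - (th - r) := lt_le_trans r_gt0 r_le.
  by rewrite lef_pV2 ?posrE ?exprn_gt0 //; nra.
rewrite ler_pdivrMr ?exprn_gt0 // /r expr_div_n mulrCA divff ?mulr1 ?expf_neq0 ?gt_eqF //.
nra.
Qed.

Lemma secular_root g i0 : 0 < g -> (forall i, d i0 <= d i) ->
  ~ ((forall i, d i = d i0 -> w i = 0) /\ phi (d i0) <= g ^+ 2) ->
  exists2 mu, mu < d i0 & phi mu = g ^+ 2.
Proof.
move=> g_gt0 hmin nhard; set th := d i0 in hmin nhard *.
have phi_mu0 := secular_far_le g_gt0 hmin.
set mu0 := th - _ in phi_mu0.
have [[i1 [hi1 w1]] | hall] :
    (exists i, d i = th /\ w i != 0) \/ (forall i, d i = th -> w i = 0).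
  case: (pickP [pred i | (d i == th) && (w i != 0)]) => [i /andP[/eqP hi wi]|hn].
    by left; exists i.
  by right => i hi; move: (hn i); rewrite /= hi eqxx /= => /negbFE/eqP.
  set sq := Num.sqrt (w i1).
  have sq_gt0 : 0 < sq by rewrite sqrtr_gt0 lt0r w1 w_ge0.
  have sq2 : sq ^+ 2 = w i1 by rewrite sqr_sqrtr ?w_ge0.
  pose mu1 := th - sq / g.
  have mu1_th : mu1 < th by rewrite /mu1 ltrBlDr ltrDl divr_gt0.
  have phi_mu1 : g ^+ 2 <= phi mu1.
    apply: le_trans (secular_term_le mu1 i1); rewrite hi1 /mu1 opprB addrC subrK.
    by rewrite expr_div_n sq2 invf_div mulrA mulrC mulrA mulVf ?mul1r // gt_eqF.
  have mu01 : mu0 <= mu1.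
    have wS : w i1 <= \sum_i w i by rewrite (bigD1 i1) //= lerDl sumr_ge0.
    have : sq / g <= (\sum_i w i + 1) / g by rewrite ler_pM2r ?invr_gt0 //; nra.
    by rewrite /mu0 /mu1; lra.
  have poles j : w j != 0 -> mu1 < d j by move=> _; apply: lt_le_trans mu1_th (hmin j).
  have [mu /andP[_ mu_le] phi_mu] := secular_ivt mu01 poles (introT andP (conj phi_mu0 phi_mu1)).
  by exists mu => //; apply: le_lt_trans mu_le mu1_th.
have phi_th : g ^+ 2 < phi th by rewrite ltNge; apply/negP => h; apply: nhard.
have poles j : w j != 0 -> th < d j.
  by move=> wj; rewrite lt_neqAle hmin andbT; apply: contraNneq wj => /esym/hall ->.
have mu0_th : mu0 <= th.
  rewrite /mu0 lerBlDr lerDl divr_ge0 ?(ltW g_gt0) //.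
  by rewrite addr_ge0 // sumr_ge0.
have [mu /andP[_ mu_le] phi_mu] := secular_ivt mu0_th poles (introT andP (conj phi_mu0 (ltW phi_th))).
exists mu => //; rewrite lt_neqAle mu_le andbT.
by apply: contraTneq phi_th => <-; rewrite phi_mu ltxx.
Qed.

End SecularEquation.

Section ComplexLift.
Variable R : rcfType.
Local Open Scope complex_scope.
Local Notation cmx X := (map_mx (real_complex R) X).

Lemma Re_cmx_mul p q (N : 'M[R]_(p, q)) (w : 'cV[R[i]]_q) :
  map_mx (@complex.Re R) (cmx N *m w) = N *m map_mx (@complex.Re R) w.
Proof.
apply/matrixP => i j; rewrite !mxE raddf_sum; apply: eq_bigr => l _.
by rewrite !mxE; case: (w l j) => c d /=; rewrite mul0r subr0.
Qed.

Lemma Im_cmx_mul p q (N : 'M[R]_(p, q)) (w : 'cV[R[i]]_q) :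
  map_mx (@complex.Im R) (cmx N *m w) = N *m map_mx (@complex.Im R) w.
Proof.
apply/matrixP => i j; rewrite !mxE raddf_sum; apply: eq_bigr => l _.
by rewrite !mxE; case: (w l j) => c d /=; rewrite mul0r addr0.
Qed.

Lemma real_part_kernel p q (N : 'M[R]_(p, q)) (w : 'cV[R[i]]_q) :
  cmx N *m w = 0 -> w != 0 -> exists2 z : 'cV[R]_q, N *m z = 0 & z != 0.
Proof.
move=> hw w0.
have ReN : N *m map_mx (@complex.Re R) w = 0 by rewrite -Re_cmx_mul hw map_mx0.
have ImN : N *m map_mx (@complex.Im R) w = 0 by rewrite -Im_cmx_mul hw map_mx0.
have [Re0|] := eqVneq (map_mx (@complex.Re R) w) 0; first last.
  by exists (map_mx (@complex.Re R) w).
have [Im0|] := eqVneq (map_mx (@complex.Im R) w) 0; first last.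
  by exists (map_mx (@complex.Im R) w).
case/eqP: w0; apply/matrixP => i j; move/matrixP: Re0 => /(_ i j).
move/matrixP: Im0 => /(_ i j); rewrite !mxE.
by case: (w i j) => a c /= -> ->.
Qed.

End ComplexLift.

(* The spectral theorem of mathcomp is stated over a numClosedFieldType, so M is
   diagonalised as a Hermitian matrix over R[i]; its eigenvalues are real. *)
Section SpectralCoordinates.
Variables (R : rcfType) (k : nat) (M : 'M[R]_k.+1).
Hypothesis M_sym : M^T = M.
Local Open Scope complex_scope.
Local Open Scope sesquilinear_scope.
Local Notation cmx X := (map_mx (real_complex R) X).
Let Mc := cmx M.
Let U := spectralmx Mc.

Let Mc_hermitian : Mc \is hermsymmx.
Proof.
apply/is_hermitianmxP; rewrite expr0 scale1r; apply/matrixP => i j.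
by rewrite !mxE -[in LHS]M_sym mxE conj_Creal // complex_real.
Qed.

Let UtU : U^t* *m U = 1%:M.
Proof.
by rewrite -invmx_unitary ?mulVmx ?unitarymx_unit ?spectral_unitarymx.
Qed.

Let UUt : U *m U^t* = 1%:M.
Proof. by rewrite -invmx_unitary ?mulmxV ?unitarymx_unit ?spectral_unitarymx. Qed.

Let U_inj (X Y : 'cV[R[i]]_k.+1) : U *m X = U *m Y -> X = Y.
Proof. by move/(congr1 (mulmx (U^t*))); rewrite !mulmxA UtU !mul1mx. Qed.

Definition eigval i := complex.Re (spectral_diag Mc 0 i).

Let eigvalC i : (eigval i)%:C = spectral_diag Mc 0 i.
Proof.
have /mxOverP /(_ 0 i) := hermitian_spectral_diag_real Mc_hermitian.
exact: RRe_real.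
Qed.

Let cmx_shift s (x : 'cV[R]_k.+1) :
  cmx ((M - s%:M) *m x) = (Mc - (s%:C)%:M) *m cmx x.
Proof. by rewrite map_mxM map_mxB map_scalar_mx. Qed.

Lemma spectral_coord s (w : 'cV[R[i]]_k.+1) i :
  (U *m ((Mc - (s%:C)%:M) *m w)) i 0 = (eigval i - s)%:C * (U *m w) i 0.
Proof.
have UMc : U *m Mc = diag_mx (spectral_diag Mc) *m U.
  have Mc_dec : Mc = invmx U *m diag_mx (spectral_diag Mc) *m U.
    exact/orthomx_spectralP/hermitian_normalmx.
  by rewrite {1}Mc_dec !mulmxA mulmxV ?spectral_unit // mul1mx.
rewrite mulmxA mulmxBr UMc mul_mx_scalar mulmxBl -mulmxA -scalemxAl.
by rewrite [in X in X - _]mul_diag_mx !mxE -eigvalC rmorphB mulrBl.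
Qed.

Lemma cdot_spectral (u w : 'cV[R[i]]_k.+1) :
  (u^t* *m w) 0 0 = \sum_i ((U *m u) i 0)^* * (U *m w) i 0.
Proof.
have -> : u^t* *m w = (U *m u)^t* *m (U *m w).
  by rewrite trmx_mul map_mxM -mulmxA (mulmxA _ U) UtU mul1mx.
by rewrite mxE; apply: eq_bigr => i _; rewrite !mxE.
Qed.

Lemma cdot_self (w : 'cV[R[i]]_k.+1) : (w^t* *m w) 0 0 = \sum_i `|w i 0| ^+ 2.
Proof. by rewrite mxE; apply: eq_bigr => i _; rewrite !mxE mulrC normCK. Qed.

Lemma dotv_cmx (x z : 'cV[R]_k.+1) : (dotv x z)%:C = ((cmx x)^t* *m cmx z) 0 0.
Proof.
rewrite dotvE rmorph_sum mxE; apply: eq_bigr => i _.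
by rewrite !mxE rmorphM conj_Creal // complex_real.
Qed.

Lemma eigval_min : exists i0, forall i, eigval i0 <= eigval i.
Proof.
exists [arg min_(i < (ord0 : 'I_k.+1)) eigval i]%O.
by case: arg_minP => //= j _ hj i; apply: hj.
Qed.

Lemma psd_shift s : (forall i, s <= eigval i) ->
  forall z, 0 <= dotv z ((M - s%:M) *m z).
Proof.
move=> hs z; rewrite -ler0c dotv_cmx cmx_shift cdot_spectral.
apply: sumr_ge0 => i _; rewrite spectral_coord mulrCA [_^* * _]mulrC -normCK.
by apply: mulr_ge0; [rewrite ler0c subr_ge0 | exact: exprn_ge0].
Qed.

Lemma unit_shift s : (forall i, s < eigval i) -> M - s%:M \in unitmx.
Proof.
move=> hs; apply: unitmx_ker0 => z hz.
have [i0 hi0] := eigval_min.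
have psd0 := psd_shift hi0 z.
have hgap : 0 < eigval i0 - s by rewrite subr_gt0.
have : dotv z ((M - s%:M) *m z) = dotv z ((M - (eigval i0)%:M) *m z) + (eigval i0 - s) * dotv z z.
  by rewrite !mulmxBl !dotvBr !dotv_scalar; ring.
rewrite hz dotv0r => h0; apply: dotv_eq0.
have := dotv_ge0 z; nra.
Qed.

Variable b : 'cV[R]_k.+1.
Let c := U *m cmx b.

Definition spectral_weight i :=
  complex.Re (c i 0) ^+ 2 + complex.Im (c i 0) ^+ 2.

Lemma spectral_weight_ge0 i : 0 <= spectral_weight i.
Proof. by rewrite addr_ge0 ?sqr_ge0. Qed.

Let spectral_weightC i : (spectral_weight i)%:C = `|c i 0| ^+ 2.
Proof. exact: add_Re2_Im2. Qed.

Let spectral_weight_eq0 i : spectral_weight i = 0 -> c i 0 = 0.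
Proof.
move=> h; have := spectral_weightC i; rewrite h rmorph0 => /esym/eqP.
by rewrite expf_eq0 /= normr_eq0 => /eqP.
Qed.

Let sqnorm_coord_div i t : `|c i 0 / t%:C| ^+ 2 = (spectral_weight i / t ^+ 2)%:C.
Proof.
rewrite normrM normfV exprMn -spectral_weightC exprVn real_normK ?complex_real //.
by rewrite rmorphM fmorphV rmorphXn.
Qed.

Lemma sqnorm_solution s x : (forall i, eigval i != s) ->
  (M - s%:M) *m x = - b -> dotv x x = secular eigval spectral_weight s.
Proof.
move=> hs hx; apply: (@complexI R).
rewrite dotv_cmx cdot_spectral /secular rmorph_sum; apply: eq_bigr => i _.
have nz : (eigval i - s)%:C != 0 by rewrite fmorph_eq0 subr_eq0.
have hxi : (eigval i - s)%:C * (U *m cmx x) i 0 = - c i 0.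
  by rewrite -spectral_coord -cmx_shift hx map_mxN mulmxN mxE.
have -> : (U *m cmx x) i 0 = - c i 0 / (eigval i - s)%:C.
  by rewrite -hxi mulrAC mulfV // mul1r.
by rewrite mulrC -normCK mulNr normrN sqnorm_coord_div.
Qed.

Lemma solution_le_secular s : (forall i, eigval i = s -> spectral_weight i = 0) ->
  exists x, (M - s%:M) *m x = - b /\ dotv x x <= secular eigval spectral_weight s.
Proof.
move=> hs.
pose y : 'cV[R[i]]_k.+1 := \col_i (- c i 0 / (eigval i - s)%:C).
pose xc := U^t* *m y.
have Uxc : U *m xc = y by rewrite mulmxA UUt mul1mx.
have hxc : cmx (M - s%:M) *m xc = - cmx b.
  rewrite map_mxB map_scalar_mx; apply: U_inj; apply/matrixP => i j.
  rewrite ord1 spectral_coord Uxc mulmxN [y i 0]mxE [RHS]mxE.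
  (* where eigval i = s, the coordinate of b vanishes and y i 0 is the junk value 0 *)
  have [hi|hi] := eqVneq (eigval i) s.
    by rewrite (spectral_weight_eq0 (hs i hi)) hi subrr !mul0r oppr0.
  by rewrite mulrC divfK // fmorph_eq0 subr_eq0.
exists (map_mx (@complex.Re R) xc); split.
  rewrite -Re_cmx_mul hxc; apply/matrixP => i j; rewrite !mxE.
  by rewrite raddfN.
have -> : secular eigval spectral_weight s =
    \sum_i (complex.Re (xc i 0) ^+ 2 + complex.Im (xc i 0) ^+ 2).
  apply: (@complexI R); rewrite !rmorph_sum.
  transitivity (\sum_i `|(U *m xc) i 0| ^+ 2).
    by apply: eq_bigr => i _; rewrite Uxc mxE mulNr normrN sqnorm_coord_div.
  under eq_bigr => i _ do rewrite normCK mulrC.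
  rewrite -cdot_spectral cdot_self; apply: eq_bigr => i _.
  exact/esym/add_Re2_Im2.
by rewrite dotvE; apply: ler_sum => i _; rewrite !mxE -expr2 lerDl sqr_ge0.
Qed.

Lemma eigenvector_real i :
  exists2 z : 'cV[R]_k.+1, (M - (eigval i)%:M) *m z = 0 & z != 0.
Proof.
pose e := U^t* *m delta_mx i (0 : 'I_1).
have Ue : U *m e = delta_mx i 0 by rewrite mulmxA UUt mul1mx.
apply: (@real_part_kernel _ _ _ _ e).
  rewrite map_mxB map_scalar_mx; apply: U_inj; apply/matrixP => j l.
  rewrite ord1 spectral_coord Ue mulmx0 !mxE.
  by have [->|] := eqVneq j i; rewrite ?subrr ?mul0r // mulr0.
apply/eqP => e0; move: Ue; rewrite e0 mulmx0 => /matrixP/(_ i 0).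
by rewrite !mxE !eqxx => /eqP; rewrite eq_sym oner_eq0.
Qed.

End SpectralCoordinates.

Lemma sphere_kkt (R : rcfType) n (M : 'M[R]_n) (b : 'cV[R]_n) g :
  (0 < n)%N -> M^T = M -> 0 < g ->
  exists mu x, [/\ (M - mu%:M) *m x = - b, dotv x x = g ^+ 2 &
                   forall z, 0 <= dotv z ((M - mu%:M) *m z)].
Proof.
case: n M b => // k M b _ M_sym g_gt0.
have [i0 hmin] := eigval_min M.
set th := eigval M i0 in hmin.
set phi := secular (eigval M) (spectral_weight M b).
pose hard := [forall i, (eigval M i == th) ==> (spectral_weight M b i == 0)] &&
             (phi th <= g ^+ 2).
have [/andP[/forallP hsing hphi] | nhard] := boolP hard.
  (* the hard case: th itself is the multiplier, reached by moving along an eigenvector *)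
  have [|x0 [hx0 x0_le]] := solution_le_secular M_sym (b := b) (s := th).
    by move=> i hi; apply/eqP; move: (hsing i); rewrite hi eqxx.
  have [z hz z0] := eigenvector_real M_sym i0.
  have [t ht] := sphere_meets_line z0 (le_trans x0_le hphi).
  exists th, (x0 + t *: z); split => //; last exact: psd_shift.
  by rewrite mulmxDr -scalemxAr hz scaler0 addr0.
have [|mu mu_th phi_mu] := secular_root (spectral_weight_ge0 M b) g_gt0 hmin.
  case=> hsing hphi; move/negP: nhard; apply; rewrite /hard hphi andbT.
  by apply/forallP => i; apply/implyP => /eqP /hsing ->.
have mu_lt i : mu < eigval M i by apply: lt_le_trans mu_th (hmin i).
have hU := unit_shift M_sym mu_lt.
have hx : (M - mu%:M) *m - (invmx (M - mu%:M) *m b) = - b.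
  by rewrite mulmxN mulmxA mulmxV // mul1mx.
exists mu, (- (invmx (M - mu%:M) *m b)); split => //.
  by rewrite (sqnorm_solution M_sym _ hx) // => i; rewrite gt_eqF.
by apply: psd_shift => // i; apply: ltW.
Qed.

Definition quadobj (R : rcfType) n (N : 'M[R]_n) (bb v : 'cV[R]_n) : R :=
  dotv v (N *m v) + 2 * dotv v bb.

Section SphereKKT.
Variables (R : rcfType) (n m : nat) (B : 'M[R]_(n, m)) (N : 'M[R]_n) (bb : 'cV[R]_n).
Hypothesis N_sym : N^T = N.
Local Notation f := (quadobj N bb).

Definition psd_on_ker (S : 'M[R]_n) :=
  forall d, B^T *m d = 0 -> 0 <= dotv d (S *m d).

Lemma quadobj_sphere_gap mu x w : (N - mu%:M) *m x = - bb -> dotv w w = dotv x x ->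
  f w - f x = dotv (w - x) ((N - mu%:M) *m (w - x)).
Proof.
move=> hx hww.
have Nx : N *m x = mu *: x - bb.
  by move: hx; rewrite mulmxBl mul_scalar_mx => /eqP; rewrite subr_eq addrC => /eqP.
rewrite /quadobj mulmxBr hx !mulmxBl !mul_scalar_mx.
rewrite !(dotvBl, dotvBr, dotvDl, dotvDr, dotvZl, dotvZr, dotvNl, dotvNr).
rewrite (dotv_sym x _ N_sym) Nx !(dotvBl, dotvBr, dotvZl, dotvZr) hww (dotvC x w).
ring.
Qed.

Lemma kkt_multiplierE mu x : (N - mu%:M) *m x = - bb -> x != 0 ->
  mu = dotv x (N *m x + bb) / dotv x x.
Proof.
move=> hx x0; have Nx : N *m x + bb = mu *: x.
  by rewrite -[bb]opprK -hx mulmxBl mul_scalar_mx opprB addrC subrK.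
by rewrite Nx dotvZr mulfK // gt_eqF // dotv_gt0.
Qed.

Lemma kkt_quadobj_min mu x w :
  (N - mu%:M) *m x = - bb -> psd_on_ker (N - mu%:M) ->
  B^T *m x = 0 -> B^T *m w = 0 -> dotv w w = dotv x x -> f x <= f w.
Proof.
move=> hx psd Bx Bw hww; rewrite -subr_ge0 (quadobj_sphere_gap hx hww).
by apply: psd; rewrite mulmxBr Bw Bx subrr.
Qed.

Lemma psd_on_ker_quad_eq0 S d : S^T = S -> psd_on_ker S -> B^T *m d = 0 ->
  B^T *m (S *m d) = 0 -> dotv d (S *m d) = 0 -> S *m d = 0.
Proof.
move=> S_sym psd Bd BSd q0; set e := S *m d.
(* q (d + t e) = 2 t |e|^2 + t^2 q e is nonnegative for all t, so |e|^2 = 0 *)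
have hq t : 0 <= 2 * t * dotv e e + t ^+ 2 * dotv e (S *m e).
  have := psd (d + t *: e); rewrite mulmxDr -scalemxAr mulmxDr -scalemxAr Bd BSd.
  rewrite scaler0 addr0 => /(_ erefl).
  rewrite !(dotvDl, dotvDr, dotvZl, dotvZr) q0 (dotv_sym e _ S_sym) (dotv_sym d _ S_sym).
  by rewrite -/e; congr (_ <= _); ring.
apply: dotv_eq0; set a := dotv e e; set c := dotv e (S *m e).
have a_ge0 : 0 <= a by apply: dotv_ge0.
have c1 : 0 < `|c| + 1 by rewrite ltr_pwDr.
have := hq (- a / (`|c| + 1)); rewrite -/a -/c => h.
have h' : 0 <= - 2 * a ^+ 2 * (`|c| + 1) + a ^+ 2 * c.
  have -> : - 2 * a ^+ 2 * (`|c| + 1) + a ^+ 2 * c =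
      (2 * (- a / (`|c| + 1)) * a + (- a / (`|c| + 1)) ^+ 2 * c) * (`|c| + 1) ^+ 2.
    by field; rewrite gt_eqF.
  by rewrite mulr_ge0 ?sqr_ge0.
have := ler_norm c; have := normr_ge0 c; nra.
Qed.

Hypothesis trB_N : B^T *m N = 0.

Lemma kkt_of_quadobj_le mu x w :
  (N - mu%:M) *m x = - bb -> psd_on_ker (N - mu%:M) ->
  B^T *m x = 0 -> B^T *m w = 0 -> dotv w w = dotv x x -> f w <= f x ->
  (N - mu%:M) *m w = - bb.
Proof.
move=> hx psd Bx Bw hww fwx.
have Bd : B^T *m (w - x) = 0 by rewrite mulmxBr Bw Bx subrr.
have shift_sym : (N - mu%:M)^T = N - mu%:M by rewrite linearB /= N_sym tr_scalar_mx.
have hd : (N - mu%:M) *m (w - x) = 0.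
  apply: (psd_on_ker_quad_eq0 shift_sym psd Bd).
    by rewrite mulmxBl mul_scalar_mx mulmxBr mulmxA trB_N mul0mx -scalemxAr Bd scaler0 subrr.
  apply/eqP; rewrite eq_le psd // andbT -(quadobj_sphere_gap hx hww) subr_le0 fwx //.
by move: hd; rewrite mulmxBr hx => /eqP; rewrite subr_eq0 => /eqP.
Qed.

Lemma kkt_multiplier_le mu nu x w :
  (N - mu%:M) *m x = - bb -> psd_on_ker (N - mu%:M) -> x != 0 ->
  (N - nu%:M) *m w = - bb -> B^T *m x = 0 -> B^T *m w = 0 ->
  dotv w w = dotv x x -> mu <= nu.
Proof.
move=> hx psd x0 hw Bx Bw hww; rewrite leNgt; apply/negP => nu_mu.
have Bd : B^T *m (w - x) = 0 by rewrite mulmxBr Bw Bx subrr.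
(* since |w| = |x|, w . (w - x) = |w - x|^2 / 2, so psd gives (nu - mu) |w - x|^2 >= 0 *)
have hd : (N - mu%:M) *m (w - x) = (nu - mu) *: w.
  rewrite mulmxBr hx opprK.
  have -> : (N - mu%:M) *m w = (N - nu%:M) *m w + (nu - mu) *: w.
    by rewrite !mulmxBl !mul_scalar_mx scalerBl addrA subrK.
  by rewrite hw addrAC addNr add0r.
have hle := psd _ Bd; rewrite hd dotvZr in hle.
have gap_half : dotv (w - x) w = dotv (w - x) (w - x) / 2.
  by rewrite !(dotvBl, dotvBr) hww (dotvC x w); field.
have /eqP : dotv (w - x) (w - x) = 0.
  apply/eqP; rewrite eq_le dotv_ge0 andbT.
  by move: hle; rewrite gap_half mulrA; have := dotv_ge0 (w - x); nra.
move/eqP/dotv_eq0/eqP; rewrite subr_eq0 => /eqP wx; rewrite wx in hw.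
have : (mu - nu) *: x = 0.
  have -> : (mu - nu) *: x = (N - nu%:M) *m x - (N - mu%:M) *m x.
    by rewrite !mulmxBl !mul_scalar_mx scalerBl; apply/matrixP => i j; rewrite !mxE; ring.
  by rewrite hw hx subrr.
by move/eqP; rewrite scaler_eq0 subr_eq0 (negPf x0) orbF gt_eqF.
Qed.

End SphereKKT.

Section Projector.
Variables (R : rcfType) (n m : nat) (A : 'M[R]_n) (C : 'M[R]_(n, m)) (b : 'cV[R]_m).
Hypothesis rkC : \rank C = m.

Lemma gram_unit : C^T *m C \in unitmx.
Proof.
apply: unitmx_ker0 => z hz.
have /dotv_eq0 Cz0 : dotv (C *m z) (C *m z) = 0.
  by rewrite /dotv trmx_mul -mulmxA (mulmxA C^T) hz mulmx0 mxE.
have rfC : row_free C^T by rewrite /row_free mxrank_tr rkC.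
apply: trmx_inj; apply/eqP; rewrite trmx0 -(mulmx_free_eq0 _ rfC) -trmx_mul Cz0.
by rewrite trmx0.
Qed.

Lemma Pm_sym : (Pm C)^T = Pm C.
Proof.
by rewrite /Pm linearB /= trmx1 !trmx_mul trmxK trmx_inv trmx_mul trmxK mulmxA.
Qed.

Lemma trC_Pm : C^T *m Pm C = 0.
Proof. by rewrite /Pm mulmxBr mulmx1 !mulmxA mulmxV ?gram_unit // mul1mx subrr. Qed.

Lemma Pm_C : Pm C *m C = 0.
Proof. by rewrite /Pm mulmxBl mul1mx -!mulmxA mulVmx ?gram_unit // mulmx1 subrr. Qed.

Lemma Pm_ker (w : 'cV[R]_n) : C^T *m w = 0 -> Pm C *m w = w.
Proof. by move=> h; rewrite /Pm mulmxBl mul1mx -(mulmxA _ C^T) h mulmx0 subr0. Qed.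

Lemma Pm_n0 : Pm C *m n0 C b = 0.
Proof. by rewrite /n0 !mulmxA Pm_C !mul0mx. Qed.

Lemma Pm_n0D (w : 'cV[R]_n) : C^T *m w = 0 -> Pm C *m (n0 C b + w) = w.
Proof. by move=> hw; rewrite mulmxDr Pm_n0 add0r Pm_ker. Qed.

Lemma PAP_sym : A^T = A -> (PAP A C)^T = PAP A C.
Proof. by move=> hA; rewrite /PAP !trmx_mul hA Pm_sym mulmxA. Qed.

Lemma trC_PAP : C^T *m PAP A C = 0.
Proof. by rewrite /PAP !mulmxA trC_Pm !mul0mx. Qed.

Lemma trC_b0 : C^T *m b0 A C b = 0.
Proof. by rewrite /b0 !mulmxA trC_Pm !mul0mx. Qed.

Lemma CQobj_n0D (w : 'cV[R]_n) : A^T = A ->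
  CQobj A C b (n0 C b + w) = quadobj (PAP A C) (b0 A C b) w.
Proof.
move=> hA.
have PAP_n0 : PAP A C *m n0 C b = 0 by rewrite /PAP -mulmxA Pm_n0 mulmx0.
have n0_b0 : dotv (n0 C b) (b0 A C b) = 0.
  by rewrite /b0 -!mulmxA dotv_mulmx Pm_sym Pm_n0 dotv0l.
rewrite /CQobj mulmxDr PAP_n0 add0r !dotvDl n0_b0 (dotv_sym _ _ (PAP_sym hA)).
by rewrite PAP_n0 dotv0r !add0r.
Qed.

Lemma CQfeasP v : CQfeas C b v <->
  exists2 w, C^T *m w = 0 /\ dotv w w = gamma C b ^+ 2 & v = n0 C b + w.
Proof.
have g0 : 0 <= gamma C b by apply: sqrtr_ge0.
split=> [[[w [hw ->]]]|[w [hw hww] ->]].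
  by rewrite Pm_n0D // normv_eqE // => hww; exists w.
by split; [exists w | rewrite Pm_n0D // normv_eqE].
Qed.

End Projector.

Lemma LGfeasP (R : rcfType) (n m : nat) (A : 'M[R]_n) (C : 'M[R]_(n, m)) (b : 'cV[R]_m)
    lam u :
  LGfeas A C b lam u <->
  [/\ (PAP A C - lam%:M) *m u = - b0 A C b, dotv u u = gamma C b ^+ 2 & C^T *m u = 0].
Proof.
have g0 : 0 <= gamma C b by apply: sqrtr_ge0.
by split=> [[hu [/(normv_eqE _ g0) uu Cu]] | [hu /(normv_eqE _ g0) uu Cu]].
Qed.

Lemma gamma_gt0 (R : rcfType) (n m : nat) (C : 'M[R]_(n, m)) (b : 'cV[R]_m) :
  normv (n0 C b) < 1 -> 0 < gamma C b.
Proof.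
move=> h1; rewrite /gamma sqrtr_gt0 subr_gt0.
have h0 : 0 <= normv (n0 C b) by apply: sqrtr_ge0.
by rewrite expr2; nra.
Qed.

Section KernelSphere.
Variables (R : rcfType) (n m : nat) (C : 'M[R]_(n, m)) (N : 'M[R]_n) (bb : 'cV[R]_n).
Hypotheses (rkC : \rank C = m) (N_sym : N^T = N).
Hypotheses (trC_N : C^T *m N = 0) (trC_bb : C^T *m bb = 0).

(* Adding K (1 - Pm C) leaves N unchanged on ker C^T.  With K above the Rayleigh quotient
   of N at u, the multiplier obtained on the whole space is below K, and this forces the
   corresponding solution into ker C^T. *)
Lemma sphere_kkt_ker g u : 0 < g -> C^T *m u = 0 -> dotv u u = g ^+ 2 ->
  exists mu x, [/\ (N - mu%:M) *m x = - bb, dotv x x = g ^+ 2, C^T *m x = 0 &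
                   psd_on_ker C (N - mu%:M)].
Proof.
move=> g_gt0 Cu uu.
have g2_gt0 : 0 < g ^+ 2 by rewrite exprn_gt0.
have n_gt0 : (0 < n)%N.
  rewrite lt0n; apply/eqP => n0; move: g2_gt0; rewrite -uu dotvE big1 ?ltxx // => i.
  by move: (ltn_ord i); rewrite {2}n0.
pose Q := 1%:M - Pm C.
have Q_sym : Q^T = Q by rewrite /Q linearB /= trmx1 Pm_sym.
have trC_Q : C^T *m Q = C^T by rewrite /Q mulmxBr mulmx1 trC_Pm // subr0.
pose K := `|dotv u (N *m u)| / g ^+ 2 + 1.
pose N' := N + K *: Q.
have N'_sym : N'^T = N' by rewrite /N' linearD linearZ /= Q_sym N_sym.
have N'_ker mu (w : 'cV[R]_n) : C^T *m w = 0 -> (N' - mu%:M) *m w = (N - mu%:M) *m w.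
  move=> Cw; rewrite !mulmxBl mulmxDl -scalemxAl /Q mulmxBl mul1mx Pm_ker //.
  by rewrite subrr scaler0 addr0.
have [mu [x [hx xx psd]]] := sphere_kkt bb n_gt0 N'_sym g_gt0.
have mu_K : mu < K.
  have := psd u; rewrite N'_ker // mulmxBl dotvBr dotv_scalar uu subr_ge0 => hu.
  rewrite -(ltr_pM2r g2_gt0) /K mulrDl mulfVK ?gt_eqF // mul1r.
  by have := ler_norm (dotv u (N *m u)); lra.
have Cx : C^T *m x = 0.
  have : C^T *m ((N' - mu%:M) *m x) = (K - mu) *: (C^T *m x).
    rewrite mulmxA mulmxBr mulmxDr trC_N add0r -scalemxAr trC_Q mul_mx_scalar.
    by rewrite -scalerBl scalemxAl.
  rewrite hx mulmxN trC_bb oppr0 => /esym/eqP.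
  by rewrite scaler_eq0 subr_eq0 gt_eqF //= => /eqP.
exists mu, x; split => //; first by rewrite -N'_ker.
by move=> d Cd; rewrite -N'_ker //; apply: psd.
Qed.

End KernelSphere.

Theorem theorem2p2 (R : rcfType) (n m : nat)
  (A : 'M[R]_n) (C : 'M[R]_(n, m)) (b : 'cV[R]_m) :
  A^T = A ->
  (m < n)%N ->
  \rank C = m ->
  normv (n0 C b) < 1 ->
  (forall v : 'cV[R]_n, CQmin A C b v ->
     let u := Pm C *m v in
     LGmin A C b (dotv u (PAP A C *m u + b0 A C b) / gamma C b ^+ 2) u) /\
  (forall (lam : R) (u : 'cV[R]_n), LGmin A C b lam u ->
     CQmin A C b (n0 C b + u)).
Proof.
(* m < n only makes the sphere nonempty; without it both implications are vacuous *)
move=> hA _ rkC hn0.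
have g_gt0 := gamma_gt0 hn0.
have N_sym := PAP_sym C hA.
have trC_N := trC_PAP A rkC.
have kkt := sphere_kkt_ker rkC N_sym trC_N (trC_b0 A b rkC) g_gt0.
have feasP := CQfeasP b rkC.
have objE w := CQobj_n0D (A := A) b rkC w hA.
split=> [v [/feasP [w [Cw ww] ->] vmin] | lam u [/LGfeasP [hu uu Cu] umin]].
  have [mu [x [hx xx Cx psd]]] := kkt _ Cw ww.
  have w0 := sphere_neq0 g_gt0 ww.
  have fwx : quadobj (PAP A C) (b0 A C b) w <= quadobj (PAP A C) (b0 A C b) x.
    by rewrite -!objE; apply: vmin; apply/feasP; exists x.
  have hw := kkt_of_quadobj_le N_sym trC_N hx psd Cx Cw (etrans ww (esym xx)) fwx.
  rewrite /= Pm_n0D // -ww -(kkt_multiplierE hw w0).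
  split=> [|nu y /LGfeasP [hy yy Cy]]; first exact/LGfeasP.
  exact: kkt_multiplier_le hw psd w0 hy Cw Cy (etrans yy (esym ww)).
have [mu [x [hx xx Cx psd]]] := kkt _ Cu uu.
have lam_mu : lam = mu.
  apply/le_anti/andP; split; first by apply: (umin mu x); apply/LGfeasP.
  exact: kkt_multiplier_le hx psd (sphere_neq0 g_gt0 xx) hu Cx Cu (etrans uu (esym xx)).
rewrite lam_mu in hu; split=> [|_ /feasP [w [Cw ww] ->]]; first by apply/feasP; exists u.
rewrite !objE.
by apply: (kkt_quadobj_min N_sym hu psd Cu Cw); rewrite ww uu.
Qed.
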